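(* Let $\mathcal{Z}$ be the set of all connected chemical reaction networks with kinetics $(\mathcal{S},\mathcal{C},\mathcal{R},k)$, and let $\mathcal{U}$ be the set of all stochastic Petri nets $(P,T,F,\omega,r)$ with $\omega\colon F\to\mathbb{N}_+$ and $r\colon T\to\mathbb{R}_{\ge0}$ satisfying: (i) there are no two distinct transitions $z\neq z'$ in $T$ with $\mathcal{N}_{\mathrm{in}}(z)=\mathcal{N}_{\mathrm{in}}(z')$, $\mathcal{N}_{\mathrm{out}}(z)=\mathcal{N}_{\mathrm{out}}(z')$, $\omega(p,z)=\omega(p,z')$ for all $p\in\mathcal{N}_{\mathrm{in}}(z)$ and $\omega(z,p)=\omega(z',p)$ for all $p\in\mathcal{N}_{\mathrm{out}}(z)$; (ii) there is no transition $z\in T$ with $\mathcal{N}_{\mathrm{in}}(z)=\mathcal{N}_{\mathrm{out}}(z)$ and $\omega(p,z)=\omega(z,p)$ for all $p\in\mathcal{N}_{\mathrm{in}}(z)$. Let $\widetilde{\mathcal{U}}$ be the set of type-1 isomorphism classes of $\mathcal{U}$. Then there is a bijection $\kappa\colon\mathcal{Z}\to\widetilde{\mathcal{U}}$ given by $\kappa(\mathcal{S},\mathcal{C},\mathcal{R},k)=[(\mathcal{S},\mathcal{R},F,\omega,k)]_1$, where the reactions serve as transitions (taken disjoint from $\mathcal{S}$), $F=\{(s,(f,g))\in\mathcal{S}\times\mathcal{R}: s\in\operatorname{Dom}(f)\}\cup\{((f,g),s)\in\mathcal{R}\times\mathcal{S}: s\in\operatorname{Dom}(g)\}$, $\omega(s,(f,g))=f(s)$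 and $\omega((f,g),s)=g(s)$. Its inverse is $\kappa^{-1}([(P,T,F,\omega,r)]_1)=(P,\mathcal{C},\mathcal{R},k)$ where $\mathcal{R}=\{(f_x,g_x):x\in T\}$ with $f_x\colon P\rightharpoonup\mathbb{N}_+$, $\operatorname{Dom}(f_x)=\mathcal{N}_{\mathrm{in}}(x)$, $f_x(y)=\omega(y,x)$, and $g_x\colon P\rightharpoonup\mathbb{N}_+$, $\operatorname{Dom}(g_x)=\mathcal{N}_{\mathrm{out}}(x)$, $g_x(y)=\omega(x,y)$; $\mathcal{C}=\bigcup_{(f,g)\in\mathcal{R}}\{f,g\}$; and $k(f_x,g_x)=r(x)$.
   Context: A positive partial multiset on a set $A$ is a partial function $A\rightharpoonup\mathbb{N}_+$ (a function from a subset $\operatorname{Dom}\subseteq A$ to the positive integers; the empty function is allowed). A connected chemical reaction network with kinetics is a quadruple $(\mathcal{S},\mathcal{C},\mathcal{R},k)$ where $\mathcal{S}$ is a finite set (species), $\mathcal{C}$ is a finite set of positive partial multisets on $\mathcal{S}$ (complexes), $\mathcal{R}\subseteq\mathcal{C}\times\mathcal{C}$ is irreflexive (no pair $(c,c)$) (reactions), $\mathcal{C}=\bigcup_{(c,c')\in\mathcal{R}}\{c,c'\}$, and $k\colon\mathcal{R}\to\mathbb{R}_{\ge0}$. A stochastic Petri net is a tuple $(P,T,F,\omega,r)$ with $P$ (places, labelled) and $T$ (transitions) finite disjoint sets, $F\subseteq(P\times T)\cup(T\times P)$ (arcs), $\omega\colon F\to\mathbb{N}_+$ (arc weights) and $r\colon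 T\to\mathbb{R}_{\ge0}$ (rates). For $z\in T$: $\mathcal{N}_{\mathrm{in}}(z)=\{p\in P:(p,z)\in F\}$ and $\mathcal{N}_{\mathrm{out}}(z)=\{p\in P:(z,p)\in F\}$. Two stochastic Petri nets $(P,T,F,\omega,r)$ and $(P',T',F',\omega',r')$ are type-1 isomorphic if $P=P'$ (places identified by their labels) and there is a bijection $\psi\colon T\to T'$ such that, extending $\psi$ by the identity on $P$, $(x,y)\in F\iff(\psi x,\psi y)\in F'$, $\omega'(\psi x,\psi y)=\omega(x,y)$ for $(x,y)\in F$, and $r'\circ\psi=r$; $[\,\cdot\,]_1$ denotes the type-1 isomorphism class. *)

From mathcomp Require Import all_boot.
From mathcomp Require Import finmap.
From Stdlib Require Import Reals.

Set Implicit Arguments.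
Unset Strict Implicit.
Unset Printing Implicit Defensive.

Local Open Scope fset_scope.
Local Open Scope fmap_scope.

(* A (positive) partial multiset on L: a finite map L -> nat whose
   domain is Dom(f) and whose values are all positive. *)
Definition pmset (L : choiceType) := {fmap L -> nat}.

Definition positive_pm (L : choiceType) (S : {fset L}) (f : pmset L) : Prop :=
  domf f `<=` S /\ (forall s (hs : s \in domf f), 0 < f.[hs])%N.

Record crn (L : choiceType) := CRN {
  species : {fset L};
  complexes : {fset pmset L};
  reactions : {fset (pmset L * pmset L)};
  kinetics : {fmap (pmset L * pmset L) -> R}
}.

Definition crn_wf (L : choiceType) (z : crn L) : Prop :=
  [/\ forall c, c \in complexes z -> positive_pm (species z) c,
      forall c, c \in reactions z -> c.1 != c.2,
      complexes z = [fset c.1 | c in reactions z] `|` [fset c.2 | c in reactions z],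
      domf (kinetics z) = reactions z
    & forall c (hc : c \in domf (kinetics z)), (0 <= (kinetics z).[hc])%R].

(* Places are labels in L,
   transitions form a finite type (hence disjoint from places).
   The arc set F is split into input arcs (P x T) and output arcs (T x P);
   the weights w_in / w_out are only meaningful on arcs (omega : F -> N+). *)
Record spn (L : choiceType) := SPN {
  places : {fset L};
  trans : finType;
  arc_in : L -> trans -> bool;
  arc_out : trans -> L -> bool;
  w_in : L -> trans -> nat;
  w_out : trans -> L -> nat;
  rate : trans -> R
}.
Arguments arc_in {L} s p z.
Arguments arc_out {L} s z p.
Arguments w_in {L} s p z.
Arguments w_out {L} s z p.
Arguments rate {L} s z.

Definition spn_wf (L : choiceType) (u : spn L) : Prop :=
  [/\ forall p z, arc_in u p z -> p \in places u,
      forall z p, arc_out u z p -> p \in places u,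
      forall p z, arc_in u p z -> (0 < w_in u p z)%N,
      forall z p, arc_out u z p -> (0 < w_out u z p)%N
    & forall z, (0 <= rate u z)%R].

Definition Nin (L : choiceType) (u : spn L) (z : trans u) : {fset L} :=
  [fset p in places u | arc_in u p z].
Definition Nout (L : choiceType) (u : spn L) (z : trans u) : {fset L} :=
  [fset p in places u | arc_out u z p].

Definition inU (L : choiceType) (u : spn L) : Prop :=
  [/\ spn_wf u,
      ~ exists z z' : trans u,
          [/\ z != z', Nin z = Nin z', Nout z = Nout z',
              forall p, p \in Nin z -> w_in u p z = w_in u p z'
            & forall p, p \in Nout z -> w_out u z p = w_out u z' p]
    & ~ exists z : trans u,
          Nin z = Nout z /\ forall p, p \in Nin z -> w_in u p z = w_out u z p].

Definition iso1 (L : choiceType) (u u' : spn L) : Prop :=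
  places u = places u' /\
  exists psi : trans u -> trans u',
    bijective psi /\
    [/\ forall p z, arc_in u p z = arc_in u' p (psi z),
        forall z p, arc_out u z p = arc_out u' (psi z) p,
        forall p z, arc_in u p z -> w_in u' p (psi z) = w_in u p z,
        forall z p, arc_out u z p -> w_out u' (psi z) p = w_out u z p
      & forall z, rate u' (psi z) = rate u z].

Definition pm_val (L : choiceType) (f : pmset L) (s : L) : nat := odflt 0%N (f.[? s]).

Definition kappa (L : choiceType) (z : crn L) : spn L :=
  @SPN L (species z) (reactions z : finType)
    (fun s x => s \in domf (val x).1)
    (fun x s => s \in domf (val x).2)
    (fun s x => pm_val (val x).1 s)
    (fun x s => pm_val (val x).2 s)
    (fun x => odflt 0%R ((kinetics z).[? val x])).

Definition f_of (L : choiceType) (u : spn L) (x : trans u) : pmset L :=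
  [fmap p : Nin x => w_in u (val p) x].
Definition g_of (L : choiceType) (u : spn L) (x : trans u) : pmset L :=
  [fmap p : Nout x => w_out u x (val p)].
Definition reac_of (L : choiceType) (u : spn L) (x : trans u) :=
  (f_of x, g_of x).

Definition kappa_inv_reactions (L : choiceType) (u : spn L) :
  {fset (pmset L * pmset L)} := [fset reac_of x | x : trans u].

Definition kappa_inv (L : choiceType) (u : spn L) : crn L :=
  let Rs := kappa_inv_reactions u in
  @CRN L (places u)
    ([fset c.1 | c in Rs] `|` [fset c.2 | c in Rs])
    Rs
    [fmap c : Rs =>
       match [pick x : trans u | reac_of x == val c] with
       | Some x => rate u x
       | None => 0%R
       end].

From mathcomp Require Import all_boot finmap.
From Stdlib Require Import Reals.

(* A net u is read as a reaction network through the map x |-> (f_x, g_x) on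
   its transitions.  Condition (i) of U says exactly that this map is
   injective, and (ii) that f_x <> g_x, so kappa^{-1} u is a well-formed
   network whose reactions are in bijection with the transitions of u, which
   makes kappa (kappa^{-1} u) type-1 isomorphic to u.  In kappa z the pair
   (f_x, g_x) of a transition x is the reaction x itself, whence
   kappa^{-1} (kappa z) = z.  A type-1 isomorphism preserves (f_x, g_x) and
   the rate of x, so kappa^{-1} is constant on isomorphism classes, and the
   injectivity of kappa modulo isomorphism follows from kappa^{-1} o kappa = id. *)

Set Implicit Arguments.
Unset Strict Implicit.
Unset Printing Implicit Defensive.

Local Open Scope fset_scope.
Local Open Scope fmap_scope.

Section FinMapGraph.
Variables (K : choiceType) (V : Type).

Lemma fnd_fmapE (S : {fset K}) (F : S -> V) (p : S) :
  [fmap q : S => F q].[? val p] = Some (F p).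
Proof. by rewrite -Some_fnd ffunE. Qed.

Lemma fmap_eq_on_dom (f g : {fmap K -> V}) :
  domf f = domf g -> {in domf f, forall k, f.[? k] = g.[? k]} -> f = g.
Proof.
move=> Edom Efnd; apply/fmapP => k.
have [/Efnd //|kNf] := boolP (k \in domf f).
have kNg : k \notin domf g by rewrite -Edom.
by rewrite !not_fnd.
Qed.

Lemma fmap_graph_eqP (S S' : {fset K}) (F G : K -> V) :
  [fmap p : S => F (val p)] = [fmap p : S' => G (val p)] <-> S = S' /\ {in S, F =1 G}.
Proof.
split=> [E | [ES EFG]].
  have ES : S = S' by case: E.
  split=> // k kS; move/fmapP/(_ k): E.
  by rewrite (fnd_fmapE _ [` kS]) -ES (fnd_fmapE _ [` kS]) => -[].
apply: fmap_eq_on_dom => // k kS.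
by rewrite (fnd_fmapE _ [` kS]) -ES (fnd_fmapE _ [` kS]) /= EFG.
Qed.
End FinMapGraph.

Lemma pm_val_gt0 (L : choiceType) (S : {fset L}) (f : pmset L) p :
  positive_pm S f -> p \in domf f -> (0 < pm_val f p)%N.
Proof. by case=> _ fpos pf; rewrite /pm_val (in_fnd pf) fpos. Qed.

Lemma crn_ext (L : choiceType) (z1 z2 : crn L) :
  species z1 = species z2 -> complexes z1 = complexes z2 ->
  reactions z1 = reactions z2 -> kinetics z1 = kinetics z2 -> z1 = z2.
Proof. by case: z1 z2 => ? ? ? ? [? ? ? ?] /= -> -> -> ->. Qed.

Section PetriNet.
Variables (L : choiceType) (u : spn L).
Implicit Types (x y : trans u) (p : L).

Lemma in_Nin_wf x p : spn_wf u -> (p \in Nin x) = arc_in u p x.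
Proof. by case=> Pin _ _ _ _; rewrite !inE andb_idl // => /Pin. Qed.

Lemma in_Nout_wf x p : spn_wf u -> (p \in Nout x) = arc_out u x p.
Proof. by case=> _ Pout _ _ _; rewrite !inE andb_idl // => /Pout. Qed.

Lemma pm_val_f_of x p : p \in Nin x -> pm_val (f_of x) p = w_in u p x.
Proof. by move=> pNx; rewrite /pm_val (fnd_fmapE _ [` pNx]). Qed.

Lemma pm_val_g_of x p : p \in Nout x -> pm_val (g_of x) p = w_out u x p.
Proof. by move=> pNx; rewrite /pm_val (fnd_fmapE _ [` pNx]). Qed.

Lemma inUP : inU u <->
  [/\ spn_wf u, injective (@reac_of L u) & forall x, f_of x != g_of x].
Proof.
have f_ofP x y := fmap_graph_eqP (Nin x) (Nin y) (w_in u ^~ x) (w_in u ^~ y).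
have g_ofP x y := fmap_graph_eqP (Nout x) (Nout y) (w_out u x) (w_out u y).
have fgP x := fmap_graph_eqP (Nin x) (Nout x) (w_in u ^~ x) (w_out u x).
split=> [[wf no_twins no_loop] | [wf reac_inj loop_free]]; split=> //.
- move=> x y /pair_equal_spec[/f_ofP[En Wn] /g_ofP[Eo Wo]].
  by apply/eqP/negPn/negP => xy; apply: no_twins; exists x, y.
- by move=> x; apply/negP => /eqP/fgP[E W]; apply: no_loop; exists x.
- case=> x [y [xy En Eo Wn Wo]]; move/negP: xy; apply; apply/eqP/reac_inj.
  by congr pair; [apply/f_ofP | apply/g_ofP].
- by case=> x [E W]; move/negP: (loop_free x); apply; apply/eqP/fgP.
Qed.

Lemma f_of_positive x : spn_wf u -> positive_pm (places u) (f_of x).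
Proof.
case=> _ _ Win _ _; split=> [|p]; first by apply/fsubsetP => p; rewrite inE => /andP[].
by move=> pN; rewrite ffunE /=; move: pN; rewrite inE => /andP[_ /Win].
Qed.

Lemma g_of_positive x : spn_wf u -> positive_pm (places u) (g_of x).
Proof.
case=> _ _ _ Wout _; split=> [|p]; first by apply/fsubsetP => p; rewrite inE => /andP[].
by move=> pN; rewrite ffunE /=; move: pN; rewrite inE => /andP[_ /Wout].
Qed.

End PetriNet.

Lemma iso1_reac_of (L : choiceType) (u u' : spn L) : iso1 u u' ->
  exists2 psi : trans u -> trans u', bijective psi &
    forall x, reac_of (psi x) = reac_of x /\ rate u' (psi x) = rate u x.
Proof.
case=> Ep [psi [bij [Ain Aout Win Wout Rt]]]; exists psi => // x; split=> //.
congr pair.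
- apply/(fmap_graph_eqP _ _ (w_in u' ^~ (psi x)) (w_in u ^~ x)); split.
    by apply/fsetP => p; rewrite !inE Ep Ain.
  by move=> p; rewrite !inE -Ain => /andP[_ /Win].
- apply/(fmap_graph_eqP _ _ (w_out u' (psi x)) (w_out u x)); split.
    by apply/fsetP => p; rewrite !inE Ep Aout.
  by move=> p; rewrite !inE -Aout => /andP[_ /Wout].
Qed.

Section KappaInv.
Variables (L : choiceType) (u : spn L).
Implicit Type x : trans u.

Lemma reac_of_in_kappa_inv x : reac_of x \in kappa_inv_reactions u.
Proof. exact: in_imfset. Qed.

Lemma fnd_kinetics_kappa_inv x : injective (@reac_of L u) ->
  (kinetics (kappa_inv u)).[? reac_of x] = Some (rate u x).
Proof.
move=> reac_inj; rewrite (fnd_fmapE _ [` reac_of_in_kappa_inv x]).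
by case: pickP => [y /eqP/reac_inj -> // | /(_ x)]; rewrite eqxx.
Qed.

Lemma kappa_inv_wf : inU u -> crn_wf (kappa_inv u).
Proof.
move=> /inUP[wf reac_inj loop_free]; split=> //.
- move=> c; rewrite inE => /orP[] /imfsetP[_ /imfsetP[x _ ->] ->].
    exact: f_of_positive.
  exact: g_of_positive.
- by move=> c /imfsetP[x _ ->]; apply: loop_free.
- move=> c cR; case/imfsetP: (cR) => x _ Ec.
  have := in_fnd cR; rewrite {1}Ec fnd_kinetics_kappa_inv // => -[<-].
  by case: wf.
Qed.

Lemma reac_of_preimage (c : kappa_inv_reactions u) : exists x, reac_of x == val c.
Proof. by case/imfsetP: (valP c) => x _ ->; exists x. Qed.

Definition transition_of (c : kappa_inv_reactions u) : trans u :=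
  xchoose (reac_of_preimage c).

Lemma reac_of_transition_of c : reac_of (transition_of c) = val c.
Proof. exact/eqP/(xchooseP (reac_of_preimage c)). Qed.

Lemma kappa_kappa_inv_iso1 : inU u -> iso1 (kappa (kappa_inv u)) u.
Proof.
move=> /inUP[wf reac_inj _]; split=> //; exists transition_of; split.
  exists (fun x => [` reac_of_in_kappa_inv x]) => [c | x].
    by apply: val_inj; rewrite /= reac_of_transition_of.
  by apply: reac_inj; rewrite reac_of_transition_of.
split=> [p c | c p | p c | c p | c] /=; rewrite -[val c]reac_of_transition_of /=.
- exact: in_Nin_wf.
- exact: in_Nout_wf.
- by move/pm_val_f_of ->.
- by move/pm_val_g_of ->.
- by rewrite fnd_kinetics_kappa_inv.
Qed.

End KappaInv.

Lemma kappa_inv_iso1 (L : choiceType) (u u' : spn L) : inU u -> inU u' ->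
  iso1 u u' -> kappa_inv u = kappa_inv u'.
Proof.
move=> /inUP[_ inj _] /inUP[_ inj' _] iso.
have [psi [phi psiK phiK] Epsi] := iso1_reac_of iso.
have ER : kappa_inv_reactions u = kappa_inv_reactions u'.
  apply/fsetP => c; apply/imfsetP/imfsetP => -[x _ ->].
    by exists (psi x); rewrite ?(Epsi x).1.
  by exists (phi x); rewrite // -(Epsi _).1 phiK.
apply: crn_ext; [by case: iso | by rewrite /= ER | exact: ER |].
apply: fmap_eq_on_dom => [|_ /imfsetP[x _ ->]]; first exact: ER.
by rewrite -{2}(Epsi x).1 !fnd_kinetics_kappa_inv // (Epsi x).2.
Qed.

Section Kappa.
Variables (L : choiceType) (z : crn L).
Hypothesis wf : crn_wf z.
Implicit Type x : trans (kappa z).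

Lemma reactions_positive c : c \in reactions z ->
  positive_pm (species z) c.1 /\ positive_pm (species z) c.2.
Proof.
case: wf => Cpos _ EC _ _ cR.
by split; apply: Cpos; rewrite EC inE; apply/orP; [left | right]; apply: in_imfset.
Qed.

Lemma Nin_kappa x : Nin x = domf (val x).1.
Proof.
have [[sub _] _] := reactions_positive (valP x).
by apply/fsetP => p; rewrite !inE andb_idl // => /(fsubsetP sub).
Qed.

Lemma Nout_kappa x : Nout x = domf (val x).2.
Proof.
have [_ [sub _]] := reactions_positive (valP x).
by apply/fsetP => p; rewrite !inE andb_idl // => /(fsubsetP sub).
Qed.

Lemma reac_of_kappa x : reac_of x = val x.
Proof.
rewrite [val x]surjective_pairing; congr pair; apply: fmap_eq_on_dom.
- exact: Nin_kappa.
- move=> p pN; have pdom : p \in domf (val x).1 by rewrite -Nin_kappa.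
  by rewrite (fnd_fmapE _ [` pN]) /= /pm_val (in_fnd pdom).
- exact: Nout_kappa.
- move=> p pN; have pdom : p \in domf (val x).2 by rewrite -Nout_kappa.
  by rewrite (fnd_fmapE _ [` pN]) /= /pm_val (in_fnd pdom).
Qed.

Lemma kappa_wf : spn_wf (kappa z).
Proof.
have [_ _ _ Edom Rpos] := wf.
split=> [p x | x p | p x | x p | x] /=.
- by rewrite -Nin_kappa inE => /andP[].
- by rewrite -Nout_kappa inE => /andP[].
- exact/pm_val_gt0/(reactions_positive (valP x)).1.
- exact/pm_val_gt0/(reactions_positive (valP x)).2.
- have xk : val x \in domf (kinetics z) by rewrite Edom (valP x).
  by rewrite (in_fnd xk); apply: Rpos.
Qed.

Lemma kappa_inU : inU (kappa z).
Proof.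
apply/inUP; split; first exact: kappa_wf.
  by move=> x y; rewrite !reac_of_kappa; apply: val_inj.
move=> x; have [-> ->] : f_of x = (val x).1 /\ g_of x = (val x).2.
  by rewrite -reac_of_kappa.
by case: wf => _ loop_free _ _ _; apply/loop_free/valP.
Qed.

Lemma kappa_invK : kappa_inv (kappa z) = z.
Proof.
have [_ _ EC Edom _] := wf.
have ER : kappa_inv_reactions (kappa z) = reactions z.
  apply/fsetP => c; apply/imfsetP/idP => [[x _ ->] | cR].
    by rewrite reac_of_kappa (valP x).
  by exists [` cR]; rewrite ?reac_of_kappa.
apply: crn_ext; [done | by rewrite /= ER EC | exact: ER |].
apply: fmap_eq_on_dom => [|c]; first by rewrite Edom.
move=> /imfsetP[x _ ->]; rewrite fnd_kinetics_kappa_inv; last first.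
  by move=> x1 x2; rewrite !reac_of_kappa; apply: val_inj.
have xk : val x \in domf (kinetics z) by rewrite Edom (valP x).
by rewrite reac_of_kappa /= (in_fnd xk).
Qed.

End Kappa.

Lemma kappa_iso1_inj (L : choiceType) (z1 z2 : crn L) : crn_wf z1 -> crn_wf z2 ->
  iso1 (kappa z1) (kappa z2) -> z1 = z2.
Proof.
move=> wf1 wf2 iso; rewrite -(kappa_invK wf1) -(kappa_invK wf2).
exact: kappa_inv_iso1 (kappa_inU wf1) (kappa_inU wf2) iso.
Qed.

Theorem proposition4 (L : choiceType) :
  (forall z : crn L, crn_wf z -> inU (kappa z)) /\
  (forall z1 z2 : crn L, crn_wf z1 -> crn_wf z2 ->
     iso1 (kappa z1) (kappa z2) -> z1 = z2) /\
  (forall u u' : spn L, inU u -> inU u' -> iso1 u u' ->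
     kappa_inv u = kappa_inv u') /\
  (forall u : spn L, inU u ->
     crn_wf (kappa_inv u) /\ iso1 (kappa (kappa_inv u)) u) /\
  (forall z : crn L, crn_wf z -> kappa_inv (kappa z) = z).
Proof.
split; first exact: kappa_inU.
split; first exact: kappa_iso1_inj.
split; first exact: kappa_inv_iso1.
split; last exact: kappa_invK.
by move=> u uU; split; [apply: kappa_inv_wf | apply: kappa_kappa_inv_iso1].
Qed.
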